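(* In the dynamic weighted storage system described in the context, each phase of a read/write operation always finishes in the last installed view in the system ($lastview$); that is, when a client completes a phase by having collected replies carrying its view $cview$ with weights summing to more than $n/2$, that view equals $lastview$.
   Context: System: servers $S=\{s_1,\dots,s_n\}$ and clients; reliable links; asynchronous; crash failures only; at most $f$ servers crash and $2f+1\le n$. Views form a sequence $v_0,v_1,\dots$ with $v_{k+1}=v_k.succ$; $v<w$ means $w$ is obtained from $v$ by applying $succ$ one or more times. Each server $s$ has a current view $s.cview$ (initially $v_0$) and a weight in each view; in every view each server's weight is strictly between $\mathbb{wl}=n/(2(n-f))$ and $\mathbb{wu}=n/(2f)$ and the total weight is at most $n$. A weighted majority for view $v$ is a set of servers whose weights in $v$ sum to more than $n/2$. View changer (server $s$ with $s.cview=v$): on timeout it sends $\langle\text{change\_view},v.succ\rangle$; once it has received or sent change\_view for $v.succ$ it forwards it if needed, disables read/write operations, sends $\langle\text{state\_update},(val,ts,cid),v,w\rangle$ to all servers (it has then uninstalled $v$), waits for state\_update messages for view $v$ with weights summing to more than $n/2$, adopts the value with largest $(ts,cid)$, sets $s.cview\leftarrow v.succ$ (installs $v.succ$) and re-enables read/write operations. A view $v$ is installed in the system once some server installs it and no server has a larger current view; $lastview$ is the last view installed in the system. Read/write protocol: each client keeps $cview$ (initially $v_0$). Each operation has two phases; in each phase the client sends a request tagged with $cview$ to all servers; a server (when read/write operations are enabled) handles it (phase 2: stores the value if its $(ts,cid)$ is larger and the views match) and replies with its current view and, if that equals the request's view, its weight in it (else $\bot$), plus its register in phase 1. The client collects replies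 whose view equals $cview$; on a reply with another view $v$ it sets $cview\leftarrow v$ if $cview<v$ and restarts the operation; the phase finishes when the collected weights exceed $n/2$. *)

From HB Require Import structures.
From mathcomp Require Import all_boot all_order all_algebra.
Set Implicit Arguments. Unset Strict Implicit. Unset Printing Implicit Defensive.
Import Order.TTheory GRing.Theory Num.Theory.
Local Open Scope ring_scope.

Section Model.
Variable R : realFieldType.
Variable n : nat.

(* Views: the view v_k is represented by the natural number k, so
   v.succ = v.+1 and  v < w  is the order on nat. *)

Definition reg := (nat * nat * nat)%type.
Definition rval (r : reg) : nat := r.1.1.
Definition rts (r : reg) : nat := r.1.2.
Definition rcid (r : reg) : nat := r.2.
Definition reg_lt (a b : reg) : bool :=
  (rts a < rts b)%N || ((rts a == rts b) && (rcid a < rcid b)%N).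
Definition reg_max (a b : reg) : reg := if reg_lt a b then b else a.
Definition reg0 : reg := (0, 0, 0)%N.

Inductive msg :=
| ChangeView of nat
| StateUpdate of reg & nat              (* <state_update, reg, v> (v = view uninstalled) *)
| Request of nat & bool & nat & reg     (* attempt tag, phase-2?, client view, value (phase 2) *)
| Reply of nat & nat & option R & reg.  (* attempt tag, server view, weight or bot, register *)

Inductive node := Srv of 'I_n | Cli of nat.
Record packet := Pkt { psrc : node; pdst : node; pbody : msg }.

Record sstate := SState {
  s_cview : nat;
  s_enabled : bool;
  s_changing : bool;                (* has sent state_update for s_cview (uninstalled it) *)
  s_reg : reg;
  s_cvrecv : nat -> bool;
  s_sus : nat -> 'I_n -> option reg;(* state_update received: view -> sender -> register *)
  s_crashed : bool }.

Inductive op := OpRead | OpWrite of nat.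
Inductive cphase :=
| Idle
| Ph1 of op & nat & ('I_n -> option (R * reg))   (* op, attempt tag, collected replies *)
| Ready2 of op & reg                              (* phase 1 done, value for phase 2 *)
| Ph2 of op & reg & nat & ('I_n -> option R).     (* op, value, attempt tag, collected *)

Record cstate := CState { c_cview : nat; c_phase : cphase; c_next : nat }.

Record gstate := GState { srv : 'I_n -> sstate; cli : nat -> cstate; net : seq packet }.

Inductive label := LStart of nat | LFinish of nat | LInternal.

Definition upd {A : Type} (F : 'I_n -> A) (i : 'I_n) (x : A) : 'I_n -> A :=
  fun j => if j == i then x else F j.
Definition updc (F : nat -> cstate) (c : nat) (x : cstate) : nat -> cstate :=
  fun d => if d == c then x else F d.

Definition bcast (a : node) (m : msg) : seq packet :=
  [seq Pkt a (Srv i) m | i <- enum 'I_n].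

Definition crash (s : sstate) : sstate :=
  SState (s_cview s) (s_enabled s) (s_changing s) (s_reg s) (s_cvrecv s) (s_sus s) true.

Definition start_vc (s : sstate) : sstate :=
  SState (s_cview s) false true (s_reg s) (s_cvrecv s) (s_sus s) (s_crashed s).
Definition vc_msgs (i : 'I_n) (s : sstate) : seq packet :=
  bcast (Srv i) (ChangeView (s_cview s).+1) ++
  bcast (Srv i) (StateUpdate (s_reg s) (s_cview s)).

Definition recv_cv (s : sstate) (w : nat) : sstate :=
  SState (s_cview s) (s_enabled s) (s_changing s) (s_reg s)
    (fun x => (x == w) || s_cvrecv s x) (s_sus s) (s_crashed s).
Definition recv_su (s : sstate) (j : 'I_n) (r : reg) (v : nat) : sstate :=
  SState (s_cview s) (s_enabled s) (s_changing s) (s_reg s) (s_cvrecv s)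
    (fun v' j' => if (v' == v) && (j' == j) then Some r else s_sus s v' j')
    (s_crashed s).

Definition su_weight (wt : nat -> 'I_n -> R) (s : sstate) (v : nat) : R :=
  \sum_(j < n | s_sus s v j != None) wt v j.

Definition adopted (s : sstate) : reg :=
  foldr (fun j acc => if s_sus s (s_cview s) j is Some r then reg_max r acc else acc)
        reg0 (enum 'I_n).

Definition install (s : sstate) : sstate :=
  SState (s_cview s).+1 true false (adopted s) (s_cvrecv s) (s_sus s) (s_crashed s).

Definition on_request (wt : nat -> 'I_n -> R) (i : 'I_n) (s : sstate)
    (k : nat) (ph2 : bool) (v : nat) (r : reg) : sstate * msg :=
  let reg' := if ph2 && (v == s_cview s) && reg_lt (s_reg s) r then r else s_reg s in
  (SState (s_cview s) (s_enabled s) (s_changing s) reg' (s_cvrecv s) (s_sus s) (s_crashed s),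
   Reply k (s_cview s) (if s_cview s == v then Some (wt (s_cview s) i) else None) (s_reg s)).

Definition start_ph1 (c : nat) (v : nat) (cs : cstate) (o : op) : cstate * seq packet :=
  (CState v (Ph1 o (c_next cs) (fun _ => None)) (c_next cs).+1,
   bcast (Cli c) (Request (c_next cs) false v reg0)).

Definition start_ph2 (c : nat) (cs : cstate) (o : op) (r : reg) : cstate * seq packet :=
  (CState (c_cview cs) (Ph2 o r (c_next cs) (fun _ => None)) (c_next cs).+1,
   bcast (Cli c) (Request (c_next cs) true (c_cview cs) r)).

Definition on_reply (c : nat) (cs : cstate) (i : 'I_n) (k v : nat) (w : option R) (r : reg)
    : cstate * seq packet * label :=
  match c_phase cs with
  | Ph1 o k' col =>
      if k == k' then
        if v == c_cview cs then
          (CState (c_cview cs) (Ph1 o k' (upd col i (Some (odflt 0 w, r)))) (c_next cs),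
           [::], LInternal)
        else if (c_cview cs < v)%N then
          let p := start_ph1 c v cs o in (p.1, p.2, LStart c)
        else (cs, [::], LInternal)
      else (cs, [::], LInternal)
  | Ph2 o r2 k' col =>
      if k == k' then
        if v == c_cview cs then
          (CState (c_cview cs) (Ph2 o r2 k' (upd col i (Some (odflt 0 w)))) (c_next cs),
           [::], LInternal)
        else if (c_cview cs < v)%N then
          let p := start_ph1 c v cs o in (p.1, p.2, LStart c)
        else (cs, [::], LInternal)
      else (cs, [::], LInternal)
  | _ => (cs, [::], LInternal)
  end.

Definition sum1 (col : 'I_n -> option (R * reg)) : R :=
  \sum_(i < n) (if col i is Some (w, _) then w else 0).
Definition sum2 (col : 'I_n -> option R) : R := \sum_(i < n) odflt 0 (col i).
Definition maxreg (col : 'I_n -> option (R * reg)) : reg :=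
  foldr (fun i acc => if col i is Some (_, r) then reg_max r acc else acc) reg0 (enum 'I_n).
Definition ph2reg (c : nat) (o : op) (m : reg) : reg :=
  match o with OpRead => m | OpWrite x => (x, (rts m).+1, c) end.

Inductive step (wt : nat -> 'I_n -> R) (f : nat) : gstate -> label -> gstate -> Prop :=
| StCrash g i :
    ~~ s_crashed (srv g i) -> (#|[set j | s_crashed (srv g j)]| < f)%N ->
    step wt f g LInternal (GState (upd (srv g) i (crash (srv g i))) (cli g) (net g))
| StTimeout g i :
    ~~ s_crashed (srv g i) -> ~~ s_changing (srv g i) ->
    step wt f g LInternal
      (GState (upd (srv g) i (start_vc (srv g i))) (cli g) (net g ++ vc_msgs i (srv g i)))
| StCVTrigger g i :
    ~~ s_crashed (srv g i) -> ~~ s_changing (srv g i) ->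
    s_cvrecv (srv g i) (s_cview (srv g i)).+1 ->
    step wt f g LInternal
      (GState (upd (srv g) i (start_vc (srv g i))) (cli g) (net g ++ vc_msgs i (srv g i)))
| StInstall g i :
    ~~ s_crashed (srv g i) -> s_changing (srv g i) ->
    n%:R / 2 < su_weight wt (srv g i) (s_cview (srv g i)) ->
    step wt f g LInternal (GState (upd (srv g) i (install (srv g i))) (cli g) (net g))
| StRecvCV g i a w l1 l2 :
    net g = l1 ++ Pkt a (Srv i) (ChangeView w) :: l2 -> ~~ s_crashed (srv g i) ->
    step wt f g LInternal (GState (upd (srv g) i (recv_cv (srv g i) w)) (cli g) (l1 ++ l2))
| StRecvSU g i j r v l1 l2 :
    net g = l1 ++ Pkt (Srv j) (Srv i) (StateUpdate r v) :: l2 -> ~~ s_crashed (srv g i) ->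
    step wt f g LInternal (GState (upd (srv g) i (recv_su (srv g i) j r v)) (cli g) (l1 ++ l2))
| StRecvReq g i c k b v r l1 l2 :
    net g = l1 ++ Pkt (Cli c) (Srv i) (Request k b v r) :: l2 ->
    ~~ s_crashed (srv g i) -> s_enabled (srv g i) ->
    step wt f g LInternal
      (GState (upd (srv g) i (on_request wt i (srv g i) k b v r).1) (cli g)
         (l1 ++ l2 ++ [:: Pkt (Srv i) (Cli c) (on_request wt i (srv g i) k b v r).2]))
| StRecvRep g c i k v w r l1 l2 :
    net g = l1 ++ Pkt (Srv i) (Cli c) (Reply k v w r) :: l2 ->
    step wt f g (on_reply c (cli g c) i k v w r).2
      (GState (srv g) (updc (cli g) c (on_reply c (cli g c) i k v w r).1.1)
         (l1 ++ l2 ++ (on_reply c (cli g c) i k v w r).1.2))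
| StInvoke g c o :
    c_phase (cli g c) = Idle ->
    step wt f g (LStart c)
      (GState (srv g) (updc (cli g) c (start_ph1 c (c_cview (cli g c)) (cli g c) o).1)
         (net g ++ (start_ph1 c (c_cview (cli g c)) (cli g c) o).2))
| StFinish1 g c o k col :
    c_phase (cli g c) = Ph1 o k col -> n%:R / 2 < sum1 col ->
    step wt f g (LFinish c)
      (GState (srv g)
         (updc (cli g) c (CState (c_cview (cli g c)) (Ready2 o (ph2reg c o (maxreg col)))
                                 (c_next (cli g c))))
         (net g))
| StStart2 g c o r :
    c_phase (cli g c) = Ready2 o r ->
    step wt f g (LStart c)
      (GState (srv g) (updc (cli g) c (start_ph2 c (cli g c) o r).1)
         (net g ++ (start_ph2 c (cli g c) o r).2))
| StFinish2 g c o r k col :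
    c_phase (cli g c) = Ph2 o r k col -> n%:R / 2 < sum2 col ->
    step wt f g (LFinish c)
      (GState (srv g)
         (updc (cli g) c (CState (c_cview (cli g c)) Idle (c_next (cli g c))))
         (net g)).

Definition init_srv : sstate :=
  SState 0%N true false reg0 (fun _ => false) (fun _ _ => None) false.
Definition init : gstate :=
  GState (fun _ => init_srv) (fun _ => CState 0%N Idle 0%N) [::].

Definition lastview (g : gstate) : nat := (\max_(i < n) s_cview (srv g i))%N.

(* weights: wl < wt v i < wu (cross-multiplied, wl = n/(2(n-f)), wu = n/(2f)),
   and total weight at most n in every view. *)
Definition weights_ok (f : nat) (wt : nat -> 'I_n -> R) : Prop :=
  (forall v i, n%:R < 2%:R * (n - f)%:R * wt v i /\ 2%:R * f%:R * wt v i < n%:R) /\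
  (forall v, \sum_(i < n) wt v i <= n%:R).

End Model.

(* A phase only counts replies carrying its view v0, and a server replies with its
   current view only while read/write operations are enabled, i.e. before it
   uninstalls that view.  Conversely, a server installs w.+1 only after receiving
   state_update messages for w, each sent when its sender uninstalled w, from
   servers of weight > n/2 in w; uninstalling is permanent, so every view below
   lastview has been uninstalled by a weight majority.  If v0 were below lastview
   right after the client (re)started the phase, the servers whose replies complete
   it would be disjoint from such a majority, yet both sets weigh more than half of a
   total weight of at most n. *)

From mathcomp Require Import all_boot all_order all_algebra.
From mathcomp Require Import lra zify.
Set Implicit Arguments. Unset Strict Implicit. Unset Printing Implicit Defensive.
Import Order.TTheory GRing.Theory Num.Theory.

Lemma interval_ind (P : nat -> Prop) (a b : nat) :
  a <= b -> P a -> (forall u, a <= u < b -> P u -> P u.+1) -> P b.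
Proof.
move=> + Pa; elim: b => [|b IH]; first by rewrite leqn0 => /eqP <-.
rewrite leq_eqVlt => /orP [/eqP <- // | ab] Pstep.
apply: (Pstep b); first lia.
by apply: IH => [|u ub]; [lia | apply: Pstep; lia].
Qed.

Lemma ler_sum_sub (R : numDomainType) (I : finType) (P Q : pred I) (x : I -> R) :
  (forall i, 0 <= x i)%R -> (forall i, P i -> Q i) ->
  (\sum_(i | P i) x i <= \sum_(i | Q i) x i)%R.
Proof.
move=> x_ge0 PQ; rewrite [X in (X <= _)%R]big_mkcond [X in (_ <= X)%R]big_mkcond /=.
apply: ler_sum => i _; case: ifP => [/PQ -> // | _]; by case: ifP.
Qed.

Lemma majorities_intersect (R : realFieldType) (I : finType) (x : I -> R) (N : R)
    (P Q : pred I) :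
  (forall i, 0 <= x i)%R -> (\sum_i x i <= N)%R ->
  (N / 2 < \sum_(i | P i) x i)%R -> (N / 2 < \sum_(i | Q i) x i)%R ->
  exists i, P i && Q i.
Proof.
move=> x_ge0 sum_le maj_P maj_Q.
case: (pickP (fun i => P i && Q i)) => [i PQi | disjoint]; first by exists i.
have P_notQ : (\sum_(i | P i) x i <= \sum_(i | ~~ Q i) x i)%R.
  by apply: ler_sum_sub => // i Pi; have := disjoint i; rewrite Pi /= => ->.
have split_sum : (\sum_i x i = \sum_(i | Q i) x i + \sum_(i | ~~ Q i) x i)%R.
  exact: bigID.
exfalso; lra.
Qed.

Lemma in_app_cons (T : Type) (x y : T) (l1 l2 : seq T) :
  List.In x (l1 ++ l2) -> List.In x (l1 ++ y :: l2).
Proof. by rewrite !List.in_app_iff /= => -[|]; auto. Qed.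

Section Protocol.
Variables (R : realFieldType) (n f : nat) (wt : nat -> 'I_n -> R).

Lemma weights_ok_ge0 : weights_ok f wt -> forall v i, (0 <= wt v i)%R.
Proof.
case=> bounds _ v i; have [lower _] := bounds v i.
rewrite leNgt; apply/negP => wt_neg.
have : (2%:R * (n - f)%:R * wt v i <= 0)%R.
  by apply: mulr_ge0_le0; [exact: mulr_ge0 | exact: ltW].
by move/(lt_le_trans lower); rewrite ltNge ler0n.
Qed.

Lemma in_bcast (a : node n) (m : msg R) (q : packet R n) :
  List.In q (bcast a m) -> exists j, q = Pkt a (Srv j) m.
Proof. by rewrite /bcast; elim: (enum 'I_n) => //= j s IH [<- | /IH]; eauto. Qed.

Definition uninstalled (s : sstate n) (w : nat) : bool :=
  (w < s_cview s) || (w == s_cview s) && s_changing s.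

Lemma cview_le_lastview (g : gstate R n) i : s_cview (srv g i) <= lastview g.
Proof. exact: (@leq_bigmax _ (fun j => s_cview (srv g j))). Qed.

Lemma lastview_le (g g' : gstate R n) :
  (forall i, s_cview (srv g i) <= s_cview (srv g' i)) -> lastview g <= lastview g'.
Proof.
by move=> le_g_g'; apply/bigmax_leqP => i _; apply: leq_trans (le_g_g' i) _;
  exact: cview_le_lastview.
Qed.

Lemma lt_lastview (g : gstate R n) w :
  w < lastview g -> exists i, w < s_cview (srv g i).
Proof.
move=> w_lt; apply/existsP; apply: contraLR w_lt => /existsPn w_ge.
by rewrite -leqNgt; apply/bigmax_leqP => i _; rewrite leqNgt w_ge.
Qed.

Inductive srv_move (j : 'I_n) (nt : seq (packet R n)) (s : sstate n) : sstate n -> Prop :=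
| MoveCrash : srv_move j nt s (crash s)
| MoveUninstall : srv_move j nt s (start_vc s)
| MoveInstall : (n%:R / 2 < su_weight wt s (s_cview s))%R -> srv_move j nt s (install s)
| MoveRecvCV w : srv_move j nt s (recv_cv s w)
| MoveRecvSU i r w : List.In (Pkt (Srv i) (Srv j) (StateUpdate R r w)) nt ->
    srv_move j nt s (recv_su s i r w)
| MoveRequest k b v r : srv_move j nt s (on_request wt j s k b v r).1.

Section ServerMove.
Variables (j : 'I_n) (nt : seq (packet R n)) (s s' : sstate n).
Hypothesis moved : srv_move j nt s s'.

Lemma srv_move_cview : s_cview s <= s_cview s'.
Proof. by case: moved => //=; lia. Qed.

Lemma srv_move_uninstalled w : uninstalled s w -> uninstalled s' w.
Proof.
rewrite /uninstalled; case: moved => [||_|w'|i r w' _|k b v r] //=.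
- by case/orP=> [-> // | /andP[-> _]]; rewrite orbT.
- by case/orP=> [| /andP[/eqP-> _]]; [lia | rewrite ltnSn].
Qed.

Lemma srv_move_install :
  s_cview s < s_cview s' ->
  (n%:R / 2 < su_weight wt s (s_cview s))%R /\ s_cview s' = (s_cview s).+1.
Proof. by case: moved => //=; rewrite ?ltnn. Qed.

Lemma srv_move_enabled :
  (s_enabled s -> ~~ s_changing s) -> s_enabled s' -> ~~ s_changing s'.
Proof. by case: moved. Qed.

Lemma srv_move_received w i :
  s_sus s' w i != None ->
  s_sus s w i != None \/ exists r, List.In (Pkt (Srv i) (Srv j) (StateUpdate R r w)) nt.
Proof.
case: moved => /=; try by left.
move=> i' r w' inj; case: ifP => [/andP[/eqP-> /eqP->] _ | _]; [right | left]; eauto.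
Qed.

End ServerMove.


Definition attempt_tag (cs : cstate R n) : option nat :=
  match c_phase cs with Ph1 _ k _ | Ph2 _ _ k _ => Some k | _ => None end.

Definition collected (cs : cstate R n) (i : 'I_n) : option R :=
  match c_phase cs with
  | Ph1 _ _ col => omap fst (col i)
  | Ph2 _ _ _ col => col i
  | _ => None
  end.

Lemma collected_untagged cs i : attempt_tag cs = None -> collected cs i = None.
Proof. by rewrite /attempt_tag /collected; case: (c_phase cs). Qed.

Variant on_reply_spec c cs i k v w (r : reg) : cstate R n * seq (packet R n) * label -> Prop :=
| OnReplyRestart o :
    on_reply_spec c cs i k v w r ((start_ph1 c v cs o).1, (start_ph1 c v cs o).2, LStart c)
| OnReplyStay cs' :
    c_cview cs' = c_cview cs -> c_next cs' = c_next cs -> attempt_tag cs' = attempt_tag cs ->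
    (forall j x, collected cs' j = Some x ->
       collected cs j = Some x \/
       [/\ j = i, x = odflt 0%R w, attempt_tag cs = Some k & v = c_cview cs]) ->
    on_reply_spec c cs i k v w r (cs', [::], LInternal).

Lemma on_replyP c cs i k v w r : on_reply_spec c cs i k v w r (on_reply c cs i k v w r).
Proof.
rewrite /on_reply; case E: (c_phase cs) => [|o k' col|o r'|o r' k' col].
all: try by apply: OnReplyStay => // *; left.
all: case: (eqVneq k k') => [-> | _]; last by apply: OnReplyStay => // *; left.
all: case: (eqVneq v (c_cview cs)) => [-> | _].
2,4: by case: ifP => _; [exact: OnReplyRestart | apply: OnReplyStay => // *; left].
all: apply: OnReplyStay => // [|j x]; rewrite /attempt_tag /collected E //=.
all: by rewrite /upd; case: (j =P i) => [-> [<-] | _]; [right | left].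
Qed.

Inductive cli_move (c : nat) (nt : seq (packet R n)) (cs : cstate R n) :
    label -> cstate R n -> Prop :=
| CliReply i k v w r : List.In (Pkt (Srv i) (Cli n c) (Reply k v w r)) nt ->
    cli_move c nt cs (on_reply c cs i k v w r).2 (on_reply c cs i k v w r).1.1
| CliInvoke o : cli_move c nt cs (LStart c) (start_ph1 c (c_cview cs) cs o).1
| CliStart2 o r : cli_move c nt cs (LStart c) (start_ph2 c cs o r).1
| CliFinish ph : (n%:R / 2 < \sum_i odflt 0%R (collected cs i))%R ->
    attempt_tag (CState (c_cview cs) ph (c_next cs)) = None ->
    cli_move c nt cs (LFinish c) (CState (c_cview cs) ph (c_next cs)).

Section ClientMove.
Variables (c : nat) (nt : seq (packet R n)) (cs cs' : cstate R n) (l : label).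
Hypothesis moved : cli_move c nt cs l cs'.

Lemma cli_move_next : c_next cs <= c_next cs'.
Proof. by case: moved => //= i k v w r _; case: on_replyP => //= cs'' _ ->. Qed.

Lemma cli_move_view :
  c_cview cs' = c_cview cs \/
  exists i k w r, List.In (Pkt (Srv i) (Cli n c) (Reply k (c_cview cs') w r)) nt.
Proof.
case: moved => /=; try by left.
by move=> i k v w r inj; case: on_replyP => /= [o | cs'' -> *]; [right; exists i, k, w, r | left].
Qed.

Lemma cli_move_start :
  l = LStart c -> attempt_tag cs' = Some (c_next cs) /\ forall i, collected cs' i = None.
Proof. by case: moved => // i k v w r _; case: on_replyP. Qed.

Lemma cli_move_finish : l = LFinish c -> (n%:R / 2 < \sum_i odflt 0%R (collected cs i))%R.
Proof. by case: moved => // [i k v w r _]; case: on_replyP. Qed.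

End ClientMove.

Definition emitted (g g' : gstate R n) (q : packet R n) : Prop :=
  match q with
  | Pkt _ _ (ChangeView _) => True
  | Pkt (Srv i) _ (StateUpdate _ w) => uninstalled (srv g' i) w
  | Pkt (Srv i) (Cli c) (Reply k v w _) =>
      [/\ s_enabled (srv g i), v = s_cview (srv g i), w = None \/ w = Some (wt v i)
        & exists b v' r, List.In (Pkt (Cli n c) (Srv i) (Request R k b v' r)) (net g)]
  | Pkt (Cli c) _ (Request k _ _ _) => k < c_next (cli g' c)
  | _ => False
  end.

Section Step.
Variables (g g' : gstate R n) (l : label).
Hypothesis gg' : step wt f g l g'.

Lemma step_srv j : srv g' j = srv g j \/ srv_move j (net g) (srv g j) (srv g' j).
Proof.
case: gg' => /= [g0 i _ _ | g0 i _ _ | g0 i _ _ _ | g0 i _ _ maj | g0 i a w l1 l2 _ _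
  | g0 i i' r w l1 l2 E _ | g0 i c k b v r l1 l2 _ _ _ | | | | |]; try by left.
all: rewrite /upd; case: (j =P i) => [-> | _]; [right | by left].
- exact: MoveCrash.
- exact: MoveUninstall.
- exact: MoveUninstall.
- exact: MoveInstall.
- exact: MoveRecvCV.
- by apply: MoveRecvSU; rewrite E; apply: List.in_elt.
- exact: MoveRequest.
Qed.

Lemma step_srv_internal : l = LInternal \/ srv g' = srv g.
Proof. by case: gg' => *; first [by left | by right]. Qed.

Lemma step_cli c :
  [/\ cli g' c = cli g c, l <> LStart c & l <> LFinish c] \/
  cli_move c (net g) (cli g c) l (cli g' c).
Proof.
have other_client c' : c <> c' -> [/\ LStart c' <> LStart c, LFinish c' <> LStart c,
    LStart c' <> LFinish c & LFinish c' <> LFinish c].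
  by move=> ne; split=> // -[/esym].
case: gg' => [g0 i _ _ | g0 i _ _ | g0 i _ _ _ | g0 i _ _ _ | g0 i a w l1 l2 _ _
  | g0 i i' r w l1 l2 _ _ | g0 i c' k b v r l1 l2 _ _ _ | g0 c' i k v w r l1 l2 E
  | g0 c' o _ | g0 c' o k col ph maj | g0 c' o r _ | g0 c' o r k col ph maj]; try by left.
all: rewrite /= /updc; case: (c =P c') => [-> | /other_client ne]; [right | left].
- by apply: CliReply; rewrite E; apply: List.in_elt.
- by case: on_replyP => *; case: ne => *; split.
- exact: CliInvoke.
- by case: ne => *; split.
- apply: CliFinish => //; congr (_ < _)%R: maj; rewrite /collected ph.
  by apply: eq_bigr => j _; case: (col j) => [[]|].
- by case: ne => *; split.
- exact: CliStart2.
- by case: ne => *; split.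
- by apply: CliFinish => //; rewrite /collected ph.
- by case: ne => *; split.
Qed.

Lemma step_net q : List.In q (net g') -> List.In q (net g) \/ emitted g g' q.
Proof.
have uninstall_msgs (g0 : gstate R n) i cs nt : List.In q (vc_msgs R i (srv g0 i)) ->
    emitted g0 (GState (upd (srv g0) i (start_vc (srv g0 i))) cs nt) q.
  rewrite /vc_msgs List.in_app_iff => -[] /in_bcast [j ->] //=.
  by rewrite /upd eqxx /uninstalled /= eqxx orbT.
have request_msgs (g0 : gstate R n) c k b v r cs nt :
    List.In q (bcast (Cli n c) (Request R k b v r)) -> k < c_next cs ->
    emitted g0 (GState (srv g0) (updc (cli g0) c cs) nt) q.
  by move=> /in_bcast [j ->] /=; rewrite /updc eqxx.
case: gg' => [g0 i _ _ | g0 i _ _ | g0 i _ _ _ | g0 i _ _ _ | g0 i a w l1 l2 E _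
  | g0 i i' r w l1 l2 E _ | g0 i c k b v r l1 l2 E _ en | g0 c i k v w r l1 l2 E
  | g0 c o _ | g0 c o k col _ _ | g0 c o r _ | g0 c o r k col _ _] /=; try by left.
- by rewrite List.in_app_iff => -[|/uninstall_msgs]; [left | right].
- by rewrite List.in_app_iff => -[|/uninstall_msgs]; [left | right].
- by left; rewrite E; apply: in_app_cons.
- by left; rewrite E; apply: in_app_cons.
- rewrite catA List.in_app_iff /= => -[old | [<- | []]].
    by left; rewrite E; apply: in_app_cons.
  right; rewrite /on_request /=; split=> //; first by case: eqP; [right | left].
  by exists b, v, r; rewrite E; apply: List.in_elt.
- rewrite catA List.in_app_iff; case: on_replyP => /= [o | cs' _ _ _ _] [old | new];
    try (by left; rewrite E; apply: in_app_cons).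
  by right; apply: request_msgs new _.
- by rewrite List.in_app_iff => -[old | new]; [left | right; apply: request_msgs new _].
- by rewrite List.in_app_iff => -[old | new]; [left | right; apply: request_msgs new _].
Qed.

Lemma step_cview i : s_cview (srv g i) <= s_cview (srv g' i).
Proof. by case: (step_srv i) => [-> | /srv_move_cview]. Qed.

Lemma step_uninstalled i w : uninstalled (srv g i) w -> uninstalled (srv g' i) w.
Proof. by case: (step_srv i) => [-> // | /srv_move_uninstalled]; apply. Qed.

Lemma step_lastview : lastview g <= lastview g'.
Proof. exact/lastview_le/step_cview. Qed.

Lemma step_next c : c_next (cli g c) <= c_next (cli g' c).
Proof. by case: (step_cli c) => [[-> _ _] | /cli_move_next]. Qed.

End Step.

Record invariant (g : gstate R n) : Prop := Invariant {
  enabled_not_changing : forall i, s_enabled (srv g i) -> ~~ s_changing (srv g i);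
  client_view_le : forall c, c_cview (cli g c) <= lastview g;
  reply_view_le : forall a b k v w r,
    List.In (Pkt a b (Reply k v w r)) (net g) -> v <= lastview g;
  reply_tag_lt : forall a c k v w r,
    List.In (Pkt a (Cli n c) (Reply k v w r)) (net g) -> k < c_next (cli g c);
  request_tag_lt : forall c b k ph v r,
    List.In (Pkt (Cli n c) b (Request R k ph v r)) (net g) -> k < c_next (cli g c);
  uninstalled_majority : forall w, w < lastview g ->
    (n%:R / 2 < \sum_(j < n | uninstalled (srv g j) w) wt w j)%R;
  state_update_uninstalled : forall i b r w,
    List.In (Pkt (Srv i) b (StateUpdate R r w)) (net g) -> uninstalled (srv g i) w;
  received_uninstalled : forall i j w, s_sus (srv g i) w j != None -> uninstalled (srv g j) w }.

Section Preservation.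
Hypothesis wt_ge0 : forall v i, (0 <= wt v i)%R.
Variables (g g' : gstate R n) (l : label).
Hypotheses (gg' : step wt f g l g') (Ig : invariant g).

Lemma enabled_not_changing_step i : s_enabled (srv g' i) -> ~~ s_changing (srv g' i).
Proof.
have := @enabled_not_changing g Ig i.
by case: (step_srv gg' i) => [-> // | /srv_move_enabled]; apply.
Qed.

Lemma client_view_le_step c : c_cview (cli g' c) <= lastview g'.
Proof.
apply: leq_trans (step_lastview gg'); case: (step_cli gg' c) => [[-> _ _] | /cli_move_view].
  exact: client_view_le.
by case=> [-> | [i [k [w [r /reply_view_le]]]]]; [exact: client_view_le | apply].
Qed.

Lemma reply_view_le_step a b k v w r :
  List.In (Pkt a b (Reply k v w r)) (net g') -> v <= lastview g'.
Proof.
case/(step_net gg') => [old | ].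
  exact: leq_trans (reply_view_le Ig old) (step_lastview gg').
case: a b => [i | ?] [? | ?] //= [_ -> _ _].
exact: leq_trans (cview_le_lastview g i) (step_lastview gg').
Qed.

Lemma reply_tag_lt_step a c k v w r :
  List.In (Pkt a (Cli n c) (Reply k v w r)) (net g') -> k < c_next (cli g' c).
Proof.
move=> /(step_net gg') sent; apply: leq_trans _ (step_next gg' c).
case: sent => [/(reply_tag_lt Ig) // | ].
by case: a => //= i [_ _ _ [b [v' [r' /(request_tag_lt Ig)]]]].
Qed.

Lemma request_tag_lt_step c b k ph v r :
  List.In (Pkt (Cli n c) b (Request R k ph v r)) (net g') -> k < c_next (cli g' c).
Proof.
case/(step_net gg') => [/(request_tag_lt Ig) k_lt | //].
exact: leq_trans k_lt (step_next gg' c).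
Qed.

Lemma state_update_uninstalled_step i b r w :
  List.In (Pkt (Srv i) b (StateUpdate R r w)) (net g') -> uninstalled (srv g' i) w.
Proof.
case/(step_net gg') => [/(state_update_uninstalled Ig) | ]; last by case: b.
exact: (step_uninstalled gg').
Qed.

Lemma received_uninstalled_step i j w :
  s_sus (srv g' i) w j != None -> uninstalled (srv g' j) w.
Proof.
move=> received; apply: (step_uninstalled gg').
case: (step_srv gg' i) received => [-> | /srv_move_received move /move].
  exact: received_uninstalled.
by case=> [/(received_uninstalled Ig) | [r /(state_update_uninstalled Ig)]].
Qed.

Lemma uninstalled_majority_step w : w < lastview g' ->
  (n%:R / 2 < \sum_(j < n | uninstalled (srv g' j) w) wt w j)%R.
Proof.
move=> w_lt'; apply: (@lt_le_trans _ _ (\sum_(j < n | uninstalled (srv g j) w) wt w j)%R).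
  case: (ltnP w (lastview g)) => [w_lt | w_ge]; first exact: uninstalled_majority.
  have [j w_lt_j] := lt_lastview w_lt'.
  have grown : s_cview (srv g j) < s_cview (srv g' j) by have := cview_le_lastview g j; lia.
  have [maj cview_j] : (n%:R / 2 < su_weight wt (srv g j) (s_cview (srv g j)))%R /\
                       s_cview (srv g' j) = (s_cview (srv g j)).+1.
    by case: (step_srv gg' j) grown => [-> | /srv_move_install]; rewrite ?ltnn.
  have -> : w = s_cview (srv g j) by have := cview_le_lastview g j; lia.
  apply: lt_le_trans maj _; apply: ler_sum_sub => // j'.
  exact: (received_uninstalled Ig).
by apply: ler_sum_sub => // j; exact: (step_uninstalled gg').
Qed.

Lemma invariant_step : invariant g'.
Proof.
split.
- exact: enabled_not_changing_step.
- exact: client_view_le_step.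
- exact: reply_view_le_step.
- exact: reply_tag_lt_step.
- exact: request_tag_lt_step.
- exact: uninstalled_majority_step.
- exact: state_update_uninstalled_step.
- exact: received_uninstalled_step.
Qed.

End Preservation.

Lemma invariant_init : invariant (init R n).
Proof.
have lastview0 : lastview (init R n) = 0 by apply/eqP; rewrite -leqn0; apply/bigmax_leqP.
by split; rewrite ?lastview0.
Qed.

Lemma trace_invariant (g : nat -> gstate R n) (l : nat -> label) t :
  (forall v i, 0 <= wt v i)%R -> g 0 = init R n ->
  (forall u, u <= t -> step wt f (g u) (l u) (g u.+1)) ->
  forall u, u <= t.+1 -> invariant (g u).
Proof.
move=> wt_ge0 g0 steps u u_le.
apply: (@interval_ind (fun u => invariant (g u)) 0 u) => // [|u' /andP [_ u'_lt]].
  by rewrite g0; exact: invariant_init.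
by apply: invariant_step => //; apply: steps; lia.
Qed.

Section Attempt.
Hypothesis wt_ge0 : forall v i, (0 <= wt v i)%R.
(* An attempt of client c with tag k in view v0; U is the set of servers that had
   already uninstalled v0 when it started. *)
Variables (c k v0 : nat) (U : pred 'I_n).

Definition current_reply (i : 'I_n) (x : R) : Prop := (x <= wt v0 i)%R /\ ~~ U i.

Definition replies_current (nt : seq (packet R n)) : Prop :=
  forall i w r, List.In (Pkt (Srv i) (Cli n c) (Reply k v0 w r)) nt ->
    current_reply i (odflt 0%R w).

Definition client_current (cs : cstate R n) : Prop :=
  [/\ c_cview cs = v0, forall k', attempt_tag cs = Some k' -> k' = k
    & forall i x, collected cs i = Some x -> current_reply i x].

Definition attempt_inv (g : gstate R n) : Prop :=
  [/\ forall i, U i -> uninstalled (srv g i) v0, replies_current (net g)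
    & client_current (cli g c)].

Lemma replies_current_step g l g' :
  invariant g -> step wt f g l g' -> (forall i, U i -> uninstalled (srv g i) v0) ->
  replies_current (net g) -> replies_current (net g').
Proof.
move=> Ig gg' U_uninstalled cur i w r /(step_net gg') [/cur // | /= [en v0_eq w_eq _]].
split; first by case: w_eq => ->.
apply/negP => /U_uninstalled; rewrite /uninstalled -v0_eq ltnn eqxx /=.
exact/negP/(enabled_not_changing Ig).
Qed.

Lemma client_current_move nt cs l cs' :
  cli_move c nt cs l cs' -> l <> LStart c ->
  replies_current nt -> client_current cs -> client_current cs'.
Proof.
case=> [i k' v w r inj | o | o r | ph _ untagged] not_start cur [view tag col] //.
  case: on_replyP not_start => // cs'' view' _ tag' col' _.
  split=> [| k'' | j x /col' [/col // | [-> -> /tag k'_eq v_eq]]].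
  - by rewrite view'.
  - by rewrite tag'; apply: tag.
  - by move: inj; rewrite k'_eq v_eq view; apply: cur.
by split=> // [k'' | j x]; [rewrite untagged | rewrite collected_untagged].
Qed.

Lemma attempt_inv_step g l g' :
  invariant g -> step wt f g l g' -> l <> LStart c -> attempt_inv g -> attempt_inv g'.
Proof.
move=> Ig gg' not_start [U_uninstalled cur client]; split.
- by move=> i /U_uninstalled; exact: (step_uninstalled gg').
- exact: replies_current_step gg' U_uninstalled cur.
- by case: (step_cli gg' c) => [[-> _ _] // | /client_current_move]; apply.
Qed.

Lemma attempt_inv_start g g' :
  invariant g -> step wt f g (LStart c) g' -> k = c_next (cli g c) ->
  c_cview (cli g' c) = v0 -> (forall i, U i -> uninstalled (srv g' i) v0) -> attempt_inv g'.
Proof.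
move=> Ig gg' k_eq view U_uninstalled.
have srv_eq : srv g' = srv g by case: (step_srv_internal gg').
split=> //.
  apply: (replies_current_step Ig gg') => [i | i w r /(reply_tag_lt Ig)].
    by rewrite -srv_eq; exact: U_uninstalled.
  by rewrite -k_eq ltnn.
case: (step_cli gg' c) => [[_ ? _] // | /cli_move_start [] // tag col].
by split=> // [k' | i x]; [rewrite tag k_eq => -[] | rewrite col].
Qed.

Lemma finished_attempt_lastview g cs :
  (forall v, \sum_i wt v i <= n%:R)%R -> invariant g ->
  (forall i, uninstalled (srv g i) v0 -> U i) -> c_cview (cli g c) = v0 ->
  client_current cs -> (n%:R / 2 < \sum_i odflt 0%R (collected cs i))%R ->
  lastview g = v0.
Proof.
move=> wt_sum Ig U_uninstalled view [_ _ col] maj.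
apply/eqP; rewrite eqn_leq -{2}view client_view_le // andbT leqNgt.
apply/negP => /(uninstalled_majority Ig) maj_uninstalled.
have maj_collected : (n%:R / 2 < \sum_(j < n | collected cs j != None) wt v0 j)%R.
  apply: lt_le_trans maj _; rewrite [X in (_ <= X)%R]big_mkcond /=; apply: ler_sum => j _.
  by case E: (collected cs j) => [x|] //=; have [] := col j x E.
have [j /andP [/U_uninstalled Uj]] :=
  majorities_intersect (wt_ge0 v0) (wt_sum v0) maj_uninstalled maj_collected.
by case E: (collected cs j) => [x|] // _; have [_] := col j x E; rewrite Uj.
Qed.

End Attempt.
End Protocol.

Theorem lemma7 (R : realFieldType) (n f : nat) (wt : nat -> 'I_n -> R)
    (g : nat -> gstate R n) (l : nat -> label) (c t0 t : nat) :
  (2 * f + 1 <= n)%N ->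
  weights_ok f wt ->
  g 0%N = init R n ->
  (forall u, (u <= t)%N -> step wt f (g u) (l u) (g u.+1)) ->
  l t0 = LStart c -> (t0 < t)%N ->
  (forall u, (t0 < u < t)%N -> l u <> LStart c) ->
  l t = LFinish c ->
  exists t', (t0 < t' <= t)%N /\ lastview (g t') = c_cview (cli (g t) c).
Proof.
(* 2f+1 <= n is needed for liveness only. *)
move=> _ wt_ok g0 steps start t0_lt_t no_restart finish.
have wt_ge0 := weights_ok_ge0 wt_ok.
have inv : forall u, u <= t.+1 -> invariant wt (g u) := trace_invariant wt_ge0 g0 steps.
set v0 := c_cview (cli (g t0.+1) c).
pose U i := uninstalled (srv (g t0.+1) i) v0.
have [_ _ client_t] : attempt_inv wt c (c_next (cli (g t0) c)) v0 U (g t).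
  apply: (@interval_ind (fun u => attempt_inv wt c _ v0 U (g u)) t0.+1) => //
    [|u /andP [t0_lt_u u_lt_t]].
    have start_step := steps t0 (ltnW t0_lt_t); rewrite start in start_step.
    by apply: (attempt_inv_start wt_ge0 (inv t0 _) start_step) => //; lia.
  apply: attempt_inv_step; [exact: wt_ge0 | apply: inv; lia | apply: steps; lia |].
  by apply: no_restart; lia.
exists t0.+1; split; first lia.
have [-> _ _] := client_t.
apply: (finished_attempt_lastview wt_ge0 wt_ok.2 (inv _ (leqW t0_lt_t)) _ erefl client_t) => //.
have := steps t (leqnn t); rewrite finish => /step_cli/(_ c).
by case=> [[_ _ []] // | /cli_move_finish]; apply.
Qed.
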